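(* Let $n,k,d\in\mathbb{N}$, let $a_{1:n}\in(\{0,1\}^d)^n$ be arbitrary, let $h^*\in\mathcal{C}^k_d$, and let $x_t:=h^*(a_t)$ for $t=1,\dots,n$. Then $\mathcal{L}_n(\textsc{Alg1}^k_d)\le 2^{2k+1}d^{2k}$ and $\mathcal{L}_n(\textsc{Alg2}^k_d)\le(2^kd^k+1)\log_2(n+1)$.
   Context: Literals over variables $x_1,\dots,x_d$ are elements of $\{x_1,\dots,x_d,\neg x_1,\dots,\neg x_d\}$. $\mathcal{C}^k_d$ is the class of $k$-CNF Boolean functions on $\{0,1\}^d$: conjunctions $c_1\wedge\dots\wedge c_m$ ($m\ge0$) where each clause $c_y$ is a disjunction of $k$ literals. Let $D:=(2d)^k$ and index the $D$ ordered $k$-tuples $(\ell_1,\dots,\ell_k)$ of literals by $j=1,\dots,D$; the map $\phi:\{0,1\}^d\to\{0,1\}^D$ sends $a$ to the vector whose $j$-th component is $\ell_1(a)\vee\dots\vee\ell_k(a)$ for the $j$-th tuple. For $\mathcal{S}\subseteq\{1,\dots,D\}$, $h_{\mathcal{S}}(c)=\bigwedge_{j\in\mathcal{S}}c^j$. Predictor $\zeta_D$ (dimension $D$, $\alpha=2^{-D/2^D}$): at time $t$, with $\mathcal{A}_t=\{c_\tau:\tau<t,x_\tau=0\}$ and $w_j=\prod_{\tau<t:x_\tau=1}c_\tau^j$ (1 if empty), it predicts $0$ with probability $1$ if $c_t\in\mathcal{A}_t$ and otherwise predicts $1$ with probability $\prod_{j=1}^D\frac{(1-\alpha)+\alpha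 w_jc_t^j}{(1-\alpha)+\alpha w_j}$. Predictor $\pi_D$: with $\mathcal{D}_t=\{j: c_\tau^j=1\ \forall\tau<t\text{ with }x_\tau=1\}$ and $y_t=\bigwedge_{j\in\mathcal{D}_t}c_t^j$, it assigns probability $\frac{t}{t+1}$ to $y_t$ and $\frac1{t+1}$ to $1-y_t$. $\textsc{Alg1}^k_d$ (resp. $\textsc{Alg2}^k_d$) is the predictor obtained by running $\zeta_D$ (resp. $\pi_D$) on the transformed side information $c_t:=\phi(a_t)$ with labels $x_t$. The cumulative log-loss of a predictor $\rho$ is $\mathcal{L}_n(\rho)=-\log_2\prod_{t=1}^n\rho(x_t\mid x_{<t};a_{1:t})$. *)

From Stdlib Require Import Reals List Bool Arith.
Import ListNotations.
Open Scope R_scope.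

(* Boolean assignment a in {0,1}^d : variable i (0 <= i < d) has value a i. *)
Definition assignment := nat -> bool.

(* Literal (i, true) = x_i ; (i, false) = not x_i. *)
Definition literal := (nat * bool)%type.

Definition eval_lit (a : assignment) (l : literal) : bool :=
  if snd l then a (fst l) else negb (a (fst l)).

(* All 2d literals over x_1..x_d (variables indexed 0..d-1). *)
Definition lits (d : nat) : list literal :=
  flat_map (fun i => [(i, true); (i, false)]) (seq 0 d).

Fixpoint ktuples {A : Type} (k : nat) (l : list A) : list (list A) :=
  match k with
  | O => [ [] ]
  | S k' => flat_map (fun x => map (cons x) (ktuples k' l)) l
  end.

Definition eval_clause (a : assignment) (c : list literal) : bool :=
  existsb (eval_lit a) c.

Definition eval_cnf (h : list (list literal)) (a : assignment) : bool :=
  forallb (eval_clause a) h.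

Definition is_kCNF (k d : nat) (h : list (list literal)) : Prop :=
  forall c, In c h -> length c = k /\ forall l, In l c -> (fst l < d)%nat.

Definition Dim (k d : nat) : nat := ((2 * d) ^ k)%nat.

Definition phi (k d : nat) (a : assignment) : list bool :=
  map (eval_clause a) (ktuples k (lits d)).

Definition comp (c : list bool) (j : nat) : bool := nth j c false.

Definition b2R (b : bool) : R := if b then 1 else 0.

Definition prodR (l : list nat) (f : nat -> R) : R :=
  fold_right Rmult 1 (map f l).

Definition log2 (x : R) : R := ln x / ln 2.

Definition alpha (D : nat) : R := Rpower 2 (- INR D / 2 ^ D).

(* c t : side information (in {0,1}^D), x t : label, times t = 1,2,... *)
Definition zeta_w (D : nat) (c : nat -> list bool) (x : nat -> bool)
  (t j : nat) : R :=
  prodR (filter (fun tau => x tau) (seq 1 (t - 1))) (fun tau => b2R (comp (c tau) j)).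

Definition zeta_inA (c : nat -> list bool) (x : nat -> bool) (t : nat) : bool :=
  existsb (fun tau => negb (x tau) && (if list_eq_dec bool_dec (c tau) (c t) then true else false))
          (seq 1 (t - 1)).

Definition zeta_p1 (D : nat) (c : nat -> list bool) (x : nat -> bool) (t : nat) : R :=
  let al := alpha D in
  prodR (seq 0 D) (fun j =>
    ((1 - al) + al * zeta_w D c x t j * b2R (comp (c t) j)) /
    ((1 - al) + al * zeta_w D c x t j)).

Definition zeta_prob (D : nat) (c : nat -> list bool) (x : nat -> bool) (t : nat) : R :=
  if zeta_inA c x t then (if x t then 0 else 1)
  else (if x t then zeta_p1 D c x t else 1 - zeta_p1 D c x t).

Definition pi_Dset (D : nat) (c : nat -> list bool) (x : nat -> bool) (t : nat) : list nat :=
  filter (fun j => forallb (fun tau => negb (x tau) || comp (c tau) j) (seq 1 (t - 1)))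
         (seq 0 D).

Definition pi_y (D : nat) (c : nat -> list bool) (x : nat -> bool) (t : nat) : bool :=
  forallb (fun j => comp (c t) j) (pi_Dset D c x t).

Definition pi_prob (D : nat) (c : nat -> list bool) (x : nat -> bool) (t : nat) : R :=
  if Bool.eqb (x t) (pi_y D c x t) then INR t / (INR t + 1) else 1 / (INR t + 1).

Definition seq_prob (rho : nat -> R) (n : nat) : R := prodR (seq 1 n) rho.

Definition logloss (rho : nat -> R) (n : nat) : R := - log2 (seq_prob rho n).

Definition Alg1_prob (k d : nat) (a : nat -> assignment) (x : nat -> bool) (t : nat) : R :=
  zeta_prob (Dim k d) (fun s => phi k d (a s)) x t.

Definition Alg2_prob (k d : nat) (a : nat -> assignment) (x : nat -> bool) (t : nat) : R :=
  pi_prob (Dim k d) (fun s => phi k d (a s)) x t.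

From Pilot Require Import Defs.
From Stdlib Require Import Reals List Bool Arith Lia Lra.
Import ListNotations.
Open Scope R_scope.

(* Both label sequences are monotone conjunctions x_t = /\_{j in J} c_t^j of the
   features c_t = phi(a_t), where J indexes the clauses of h*.  For pi_D, the set
   D_t of coordinates consistent with every positive example always contains J,
   so pi_D only errs on positive examples and every error strictly shrinks D_t:
   there are at most D errors, each of probability >= 1/(n+1), while the correct
   rounds telescope to 1/(n+1).  For zeta_D, the probability of the sequence is
   at least alpha^N (1-alpha)^M, where N <= 2^D counts the distinct negative
   feature vectors (a repeated one is predicted with certainty) and M <= D the
   coordinates removed from D_t.  As -log2 alpha = D/2^D, -log2 (1-alpha) <= D+1,
   and either N = 0 (no negatives) or M < D (J is nonempty and never removed), the
   loss is at most 2D^2. *)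

Lemma prodR_app (l1 l2 : list nat) (f : nat -> R) :
  prodR (l1 ++ l2) f = prodR l1 f * prodR l2 f.
Proof.
  unfold prodR; induction l1 as [|z l1 IH]; simpl; [ring | rewrite IH; ring].
Qed.

Lemma prodR_ext (l : list nat) (f g : nat -> R) :
  (forall z, In z l -> f z = g z) -> prodR l f = prodR l g.
Proof.
  unfold prodR; induction l as [|z l IH]; simpl; intros Hfg; [reflexivity|].
  rewrite Hfg, IH; auto.
Qed.

Lemma seq_prob_succ (rho : nat -> R) (n : nat) :
  seq_prob rho (S n) = seq_prob rho n * rho (S n).
Proof.
  unfold seq_prob; rewrite seq_S, prodR_app; unfold prodR at 2; simpl; ring.
Qed.

Lemma pow_le_pow_of_le_1 (q : R) (m n : nat) :
  0 <= q <= 1 -> (m <= n)%nat -> q ^ n <= q ^ m.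
Proof.
  intros Hq Hmn; induction Hmn as [|n _ IH]; [lra|].
  simpl; apply Rle_trans with (q ^ n); [|exact IH].
  rewrite <- (Rmult_1_l (q ^ n)) at 2.
  apply Rmult_le_compat_r; [apply pow_le|]; lra.
Qed.

Lemma inv_succ_pow_le (a : R) (m e : nat) :
  0 < a -> (S m <= e)%nat -> (/ (a + 1)) ^ e <= (/ a) ^ m * / (a + 1).
Proof.
  intros Ha Hme.
  assert (Hq : 0 <= / (a + 1) <= 1).
  { split; [left; apply Rinv_0_lt_compat; lra|].
    rewrite <- Rinv_1; apply Rinv_le_contravar; lra. }
  apply Rle_trans with ((/ (a + 1)) ^ S m); [apply pow_le_pow_of_le_1; assumption|].
  simpl; rewrite Rmult_comm; apply Rmult_le_compat_r; [lra|].
  apply pow_incr; split; [lra|apply Rinv_le_contravar; lra].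
Qed.

Lemma prodR_ratio (al : R) (p q : nat -> bool) (l : list nat) :
  al < 1 ->
  prodR l (fun j => ((1 - al) + al * b2R (p j) * b2R (q j)) / ((1 - al) + al * b2R (p j))) =
  (1 - al) ^ length (filter (fun j => p j && negb (q j)) l).
Proof.
  intros Hal; unfold prodR; induction l as [|z l IH]; simpl; [reflexivity|].
  rewrite IH; destruct (p z), (q z); simpl; field; lra.
Qed.

Lemma length_filter_andb {A : Type} (p q : A -> bool) (l : list A) :
  length (filter p l) =
  (length (filter (fun z => p z && q z) l) +
   length (filter (fun z => p z && negb (q z)) l))%nat.
Proof. induction l as [|z l IH]; simpl; [|destruct (p z), (q z); simpl]; lia. Qed.

Lemma forallb_filter_nil {A : Type} (p f : A -> bool) (l : list A) :
  forallb f (filter p l) = true <-> filter (fun z => p z && negb (f z)) l = [].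
Proof.
  induction l as [|z l IH]; simpl; [tauto|].
  destruct (p z); simpl; [destruct (f z); simpl|]; try exact IH; split; discriminate.
Qed.

Lemma length_flat_map_const {A B : Type} (f : A -> list B) (m : nat) (l : list A) :
  (forall z, length (f z) = m) -> length (flat_map f l) = (m * length l)%nat.
Proof.
  intros Hf; induction l as [|z l IH]; simpl; [lia|].
  rewrite length_app, Hf, IH; lia.
Qed.

Lemma length_ktuples {A : Type} (k : nat) (l : list A) :
  length (ktuples k l) = (length l ^ k)%nat.
Proof.
  induction k as [|k IH]; simpl; [reflexivity|].
  rewrite (length_flat_map_const _ (length l ^ k)); [lia|].
  intros z; rewrite length_map; exact IH.
Qed.

Lemma In_ktuples {A : Type} (k : nat) (l t : list A) :
  length t = k -> (forall z, In z t -> In z l) -> In t (ktuples k l).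
Proof.
  revert t; induction k as [|k IH]; intros [|z t] Hlen Hin; simpl in *;
    try discriminate; auto.
  apply in_flat_map; exists z; split; auto.
  apply in_map, IH; auto.
Qed.

Lemma length_lits (d : nat) : length (lits d) = (2 * d)%nat.
Proof.
  unfold lits; rewrite (length_flat_map_const _ 2), length_seq; reflexivity.
Qed.

Lemma In_lits (d : nat) (l : literal) : (fst l < d)%nat -> In l (lits d).
Proof.
  destruct l as [i b]; simpl; intros Hi.
  apply in_flat_map; exists i; split; [apply in_seq; lia|].
  destruct b; simpl; auto.
Qed.

Lemma length_phi (k d : nat) (a : assignment) : length (phi k d a) = Dim k d.
Proof. unfold phi, Dim; rewrite length_map, length_ktuples, length_lits; reflexivity. Qed.

Lemma kCNF_feature_conjunction (k d : nat) (h : list (list literal)) :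
  is_kCNF k d h ->
  exists J, (forall j, In j J -> (j < Dim k d)%nat) /\
    forall a, eval_cnf h a = forallb (Defs.comp (phi k d a)) J.
Proof.
  unfold is_kCNF, eval_cnf; induction h as [|cl h IH]; intros Hh.
  - exists []; simpl; tauto.
  - destruct IH as [J [HJ HJa]]; [intros; apply Hh; simpl; auto|].
    destruct (Hh cl (or_introl eq_refl)) as [Hlen Hlit].
    assert (Hcl : In cl (ktuples k (lits d)))
      by (apply In_ktuples; auto; intros; apply In_lits; auto).
    destruct (In_nth _ _ [] Hcl) as [j [Hj Hnth]].
    rewrite length_ktuples, length_lits in Hj.
    exists (j :: J); split.
    + intros j' [<-|Hj']; auto.
    + intros a; simpl; rewrite HJa; f_equal.
      unfold Defs.comp, phi.
      rewrite (nth_indep _ false (eval_clause a []))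
        by (rewrite length_map, length_ktuples, length_lits; exact Hj).
      rewrite map_nth, Hnth; reflexivity.
Qed.

Lemma ln2_pos : 0 < ln 2.
Proof. pose proof ln_lt_2; lra. Qed.

Lemma log2_le_log2 (x y : R) : 0 < x -> x <= y -> log2 x <= log2 y.
Proof.
  intros Hx Hxy; unfold log2, Rdiv; apply Rmult_le_compat_r.
  - left; apply Rinv_0_lt_compat, ln2_pos.
  - destruct (Req_dec x y) as [<-|Hne]; [lra|].
    left; apply ln_increasing; lra.
Qed.

Lemma log2_mult (x y : R) : 0 < x -> 0 < y -> log2 (x * y) = log2 x + log2 y.
Proof. intros Hx Hy; unfold log2; rewrite ln_mult by assumption; field; apply ln_neq_0; lra. Qed.

Lemma log2_pow (x : R) (n : nat) : 0 < x -> log2 (x ^ n) = INR n * log2 x.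
Proof. intros Hx; unfold log2; rewrite ln_pow by assumption; field; apply ln_neq_0; lra. Qed.

Lemma log2_Rinv (x : R) : 0 < x -> log2 (/ x) = - log2 x.
Proof. intros Hx; unfold log2; rewrite ln_Rinv by assumption; field; apply ln_neq_0; lra. Qed.

Lemma log2_Rpower2 (y : R) : log2 (Rpower 2 y) = y.
Proof. unfold log2; rewrite ln_Rpower; field; apply ln_neq_0; lra. Qed.

Lemma logloss_le_of_le (rho : nat -> R) (n : nat) (Q : R) :
  0 < Q -> Q <= seq_prob rho n ->
  0 < seq_prob rho n /\ logloss rho n <= - log2 Q.
Proof.
  intros HQ HQP; split; [lra|].
  unfold logloss; apply Ropp_le_contravar, log2_le_log2; assumption.
Qed.

Lemma alpha_pos (D : nat) : 0 < alpha D.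
Proof. apply exp_pos. Qed.

Lemma log2_alpha (D : nat) : log2 (alpha D) = - (INR D / 2 ^ D).
Proof. unfold alpha; rewrite log2_Rpower2; field; apply pow_nonzero; lra. Qed.

Lemma INR_lt_pow2 (D : nat) : INR D < 2 ^ D.
Proof.
  rewrite <- (pow_INR 2); apply lt_INR, Nat.pow_gt_lin_r; lia.
Qed.

Lemma alpha_le_1 (D : nat) : alpha D <= 1.
Proof.
  rewrite <- (Rpower_O 2) by lra; apply Rle_Rpower; [lra|].
  assert (0 <= INR D / 2 ^ D)
    by (apply Rle_mult_inv_pos; [apply pos_INR|apply pow_lt; lra]).
  unfold Rdiv in *; rewrite Ropp_mult_distr_l_reverse; lra.
Qed.

Lemma alpha_lt_1 (D : nat) : (1 <= D)%nat -> alpha D < 1.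
Proof.
  intros HD; rewrite <- (Rpower_O 2) by lra; apply Rpower_lt; [lra|].
  assert (0 < INR D / 2 ^ D)
    by (apply Rdiv_lt_0_compat; [apply lt_0_INR; lia|apply pow_lt; lra]).
  unfold Rdiv in *; rewrite Ropp_mult_distr_l_reverse; lra.
Qed.

Lemma one_minus_alpha_ge (D : nat) : (1 <= D)%nat -> / 2 ^ (D + 1) <= 1 - alpha D.
Proof.
  intros HD; destruct (Nat.eq_dec D 1) as [->|HD2].
  - (* alpha 1 = 2^(-1/2), and its square 1/2 < (3/4)^2 *)
    assert (Hsq : alpha 1 * alpha 1 = / 2).
    { unfold alpha; rewrite <- Rpower_plus.
      replace (- INR 1 / 2 ^ 1 + - INR 1 / 2 ^ 1) with (- (1)) by (simpl; field).
      rewrite Rpower_Ropp, Rpower_1; lra. }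
    pose proof (alpha_pos 1); simpl; nra.
  - (* alpha D = exp (-y) <= 1/(1+y) with y = D 2^-D ln 2 in (0,1] *)
    set (u := INR D / 2 ^ D); set (y := u * ln 2).
    assert (HD' : 2 <= INR D) by (apply (le_INR 2); lia).
    assert (Hpow : 0 < 2 ^ D) by (apply pow_lt; lra).
    assert (Hu : 2 ^ D * u = INR D) by (unfold u; field; lra).
    assert (Hu0 : 0 < u) by (unfold u; apply Rdiv_lt_0_compat; lra).
    assert (Hu1 : u <= 1).
    { pose proof (INR_lt_pow2 D); apply Rmult_le_reg_l with (2 ^ D); lra. }
    assert (Hln2 : / 2 < ln 2 < 1).
    { split; [exact ln_lt_2|].
      rewrite <- ln_exp; apply ln_increasing; [lra|].
      pose proof (exp_ineq1 1); lra. }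
    assert (Hy : u / 2 <= y <= 1) by (unfold y; split; nra).
    assert (Halpha : alpha D <= / (1 + y)).
    { replace (alpha D) with (/ exp y)
        by (unfold alpha, Rpower, y, u; rewrite <- exp_Ropp; f_equal; field; lra).
      apply Rinv_le_contravar; [lra|apply exp_ineq1_le]. }
    assert (Hy2 : y / 2 <= 1 - / (1 + y)).
    { replace (1 - / (1 + y)) with (y / (1 + y)) by (field; lra).
      apply Rmult_le_compat_l; [lra|apply Rinv_le_contravar; lra]. }
    rewrite pow_add; simpl pow.
    apply Rle_trans with (u / 4); [|lra].
    apply Rmult_le_reg_l with (2 ^ D * 4); [lra|].
    replace (2 ^ D * 4 * / (2 ^ D * (2 * 1))) with 2 by (field; lra).
    lra.
Qed.

Lemma neg_log2_one_minus_alpha_le (D : nat) :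
  (1 <= D)%nat -> - log2 (1 - alpha D) <= INR D + 1.
Proof.
  intros HD.
  assert (Hinv : / 2 ^ (D + 1) = Rpower 2 (- INR (D + 1)))
    by (rewrite Rpower_Ropp, Rpower_pow by lra; reflexivity).
  assert (Hpos : 0 < / 2 ^ (D + 1)) by (apply Rinv_0_lt_compat, pow_lt; lra).
  pose proof (log2_le_log2 _ _ Hpos (one_minus_alpha_ge D HD)) as Hle.
  rewrite Hinv, log2_Rpower2, plus_INR in Hle; simpl in Hle; lra.
Qed.

Lemma zeta_weight_bound (D N M : nat) :
  (N <= 2 ^ D)%nat -> (M <= D)%nat -> (N = 0 \/ M < D)%nat ->
  0 < alpha D ^ N * (1 - alpha D) ^ M /\
  - log2 (alpha D ^ N * (1 - alpha D) ^ M) <= 2 * INR D ^ 2.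
Proof.
  intros HN HM HNM; destruct (Nat.eq_dec D 0) as [->|HD].
  - replace M with 0%nat by lia; replace N with 0%nat by lia; simpl.
    unfold log2; rewrite Rmult_1_l, ln_1; split; lra.
  - pose proof (alpha_pos D); pose proof (alpha_lt_1 D ltac:(lia)).
    assert (Hpos : 0 < alpha D ^ N * (1 - alpha D) ^ M)
      by (apply Rmult_lt_0_compat; apply pow_lt; lra).
    split; [exact Hpos|].
    rewrite log2_mult, !log2_pow, log2_alpha by (try apply pow_lt; lra).
    set (L := log2 (1 - alpha D)).
    assert (HL : - (INR D + 1) <= L <= 0).
    { split; [pose proof (neg_log2_one_minus_alpha_le D ltac:(lia)); unfold L; lra|].
      assert (Hle1 : log2 (1 - alpha D) <= log2 1) by (apply log2_le_log2; lra).
      unfold L; unfold log2 at 2 in Hle1; rewrite ln_1 in Hle1; lra. }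
    assert (HNu : INR N * (INR D / 2 ^ D) <= INR D).
    { assert (HN' : INR N <= 2 ^ D) by (rewrite <- (pow_INR 2); apply le_INR; exact HN).
      pose proof (pow_lt 2 D ltac:(lra)); pose proof (pos_INR D).
      apply Rle_trans with (2 ^ D * (INR D / 2 ^ D)); [|right; field; lra].
      apply Rmult_le_compat_r; [apply Rle_mult_inv_pos|]; lra. }
    assert (HD1 : 1 <= INR D) by (apply (le_INR 1); lia).
    assert (HMD : INR M <= INR D) by (apply le_INR; exact HM).
    pose proof (pos_INR M); pose proof (pos_INR N).
    destruct HNM as [->|HMD1]; simpl INR.
    + nra.
    + assert (INR M + 1 <= INR D) by (rewrite <- S_INR; apply le_INR; lia).
      nra.
Qed.

(** * Learning a monotone conjunction of features *)

Section MonotoneConjunction.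

Variables (D : nat) (c : nat -> list bool) (x : nat -> bool) (J : list nat).
Hypothesis J_lt_D : forall j, In j J -> (j < D)%nat.
Hypothesis x_conj : forall t, x t = forallb (Defs.comp (c t)) J.

Definition consistent (t j : nat) : bool :=
  forallb (fun tau => negb (x tau) || Defs.comp (c tau) j) (seq 1 (t - 1)).

Definition falsified (t : nat) : list nat :=
  filter (fun j => consistent t j && negb (Defs.comp (c t) j)) (seq 0 D).

Lemma consistent_succ (t j : nat) :
  consistent (S (S t)) j =
  consistent (S t) j && (negb (x (S t)) || Defs.comp (c (S t)) j).
Proof.
  unfold consistent; replace (S (S t) - 1)%nat with (S t) by lia.
  replace (S t - 1)%nat with t by lia.
  rewrite seq_S, forallb_app; simpl; rewrite andb_true_r; reflexivity.
Qed.

Lemma pi_Dset_eq (t : nat) : pi_Dset D c x t = filter (consistent t) (seq 0 D).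
Proof. reflexivity. Qed.

Lemma length_pi_Dset_1 : length (pi_Dset D c x 1) = D.
Proof.
  unfold pi_Dset; simpl; rewrite <- (length_seq D 0) at 2.
  induction (seq 0 D); simpl; auto.
Qed.

Lemma length_pi_Dset_le (t : nat) : (length (pi_Dset D c x t) <= D)%nat.
Proof. unfold pi_Dset; rewrite <- (length_seq D 0) at 2; apply filter_length_le. Qed.

Lemma pi_Dset_succ_neg (t : nat) :
  x (S t) = false -> pi_Dset D c x (S (S t)) = pi_Dset D c x (S t).
Proof.
  intros Hx; rewrite !pi_Dset_eq; apply filter_ext; intros j.
  rewrite consistent_succ, Hx, andb_true_r; reflexivity.
Qed.

Lemma length_pi_Dset_succ_pos (t : nat) :
  x (S t) = true ->
  (length (pi_Dset D c x (S (S t))) + length (falsified (S t)))%nat =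
  length (pi_Dset D c x (S t)).
Proof.
  intros Hx; unfold falsified; rewrite !pi_Dset_eq.
  rewrite (length_filter_andb (consistent (S t)) (Defs.comp (c (S t)))).
  do 2 f_equal; apply filter_ext; intros j.
  rewrite consistent_succ, Hx; reflexivity.
Qed.

Lemma consistent_of_In (t j : nat) : In j J -> consistent t j = true.
Proof.
  intros Hj; apply forallb_forall; intros tau _.
  destruct (x tau) eqn:Hx; simpl; [|reflexivity].
  rewrite x_conj, forallb_forall in Hx; auto.
Qed.

Lemma In_pi_Dset_of_In (t j : nat) : In j J -> In j (pi_Dset D c x t).
Proof.
  intros Hj; rewrite pi_Dset_eq; apply filter_In; split.
  - apply in_seq; specialize (J_lt_D j Hj); lia.
  - apply consistent_of_In; exact Hj.
Qed.

Lemma falsified_neg (t : nat) : x t = false -> falsified t <> [].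
Proof.
  intros Hx Hnil; rewrite x_conj in Hx.
  assert (Hall : forallb (Defs.comp (c t)) J = true); [|congruence].
  apply forallb_forall; intros j Hj.
  destruct (Defs.comp (c t) j) eqn:Hcj; [reflexivity|exfalso].
  assert (Hin : In j (falsified t)).
  { apply filter_In; split; [apply in_seq; specialize (J_lt_D j Hj); lia|].
    rewrite consistent_of_In, Hcj by assumption; reflexivity. }
  rewrite Hnil in Hin; exact Hin.
Qed.

Lemma pi_y_iff (t : nat) : pi_y D c x t = true <-> falsified t = [].
Proof. unfold pi_y; rewrite pi_Dset_eq; apply forallb_filter_nil. Qed.

Lemma pi_y_label (t : nat) : pi_y D c x t = true -> x t = true.
Proof.
  intros Hy; apply pi_y_iff in Hy.
  destruct (x t) eqn:Hx; [reflexivity|].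
  exfalso; exact (falsified_neg t Hx Hy).
Qed.

(** ** The predictor pi_D *)

Definition pi_exponent (n : nat) : nat := (1 + D - length (pi_Dset D c x (S n)))%nat.

Lemma pi_exponent_succ (n : nat) : (pi_exponent n <= pi_exponent (S n))%nat.
Proof.
  unfold pi_exponent; destruct (x (S n)) eqn:Hx.
  - rewrite <- (length_pi_Dset_succ_pos n Hx); lia.
  - rewrite (pi_Dset_succ_neg n Hx); lia.
Qed.

Lemma pi_exponent_succ_mistake (n : nat) :
  x (S n) = true -> pi_y D c x (S n) = false -> (pi_exponent n < pi_exponent (S n))%nat.
Proof.
  intros Hx Hy.
  assert (Hfals : falsified (S n) <> []) by (intros Hnil; apply pi_y_iff in Hnil; congruence).
  pose proof (length_pi_Dset_le (S n)) as Hle.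
  pose proof (length_pi_Dset_succ_pos n Hx) as Hsplit.
  unfold pi_exponent; destruct (falsified (S n)); [congruence|].
  simpl length in Hsplit; lia.
Qed.

Lemma pi_prob_nonneg (t : nat) : 0 <= pi_prob D c x t.
Proof.
  pose proof (pos_INR t); unfold pi_prob.
  destruct (Bool.eqb _ _); apply Rle_mult_inv_pos; lra.
Qed.

Lemma pi_seq_prob_ge (n : nat) :
  (/ (INR n + 1)) ^ pi_exponent n <= seq_prob (pi_prob D c x) n.
Proof.
  induction n as [|n IH].
  - unfold pi_exponent; rewrite length_pi_Dset_1.
    replace (1 + D - D)%nat with 1%nat by lia.
    unfold seq_prob, prodR; simpl; lra.
  - rewrite seq_prob_succ.
    set (a := INR n + 1) in IH.
    assert (Ha : 0 < a) by (pose proof (pos_INR n); unfold a; lra).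
    replace (INR (S n) + 1) with (a + 1) by (unfold a; rewrite S_INR; ring).
    apply Rle_trans with ((/ a) ^ pi_exponent n * pi_prob D c x (S n));
      [|apply Rmult_le_compat_r; [apply pi_prob_nonneg|exact IH]].
    pose proof (pi_exponent_succ n).
    unfold pi_prob; replace (INR (S n)) with a by (unfold a; rewrite S_INR; reflexivity).
    destruct (Bool.eqb (x (S n)) (pi_y D c x (S n))) eqn:Hpred.
    + assert (He : (1 <= pi_exponent n)%nat)
        by (pose proof (length_pi_Dset_le (S n)); unfold pi_exponent; lia).
      destruct (pi_exponent n) as [|m] eqn:Hm; [lia|].
      replace ((/ a) ^ S m * (a / (a + 1))) with ((/ a) ^ m * / (a + 1))
        by (simpl; field; lra).
      apply inv_succ_pow_le; [exact Ha|lia].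
    + assert (Hmis : x (S n) = true /\ pi_y D c x (S n) = false).
      { destruct (x (S n)) eqn:Hx, (pi_y D c x (S n)) eqn:Hy; try discriminate.
        - split; reflexivity.
        - apply pi_y_label in Hy; congruence. }
      destruct Hmis as [Hx Hy].
      pose proof (pi_exponent_succ_mistake n Hx Hy).
      unfold Rdiv; rewrite Rmult_1_l; apply inv_succ_pow_le; [exact Ha|lia].
Qed.

Theorem pi_logloss_le (n : nat) :
  0 < seq_prob (pi_prob D c x) n /\
  logloss (pi_prob D c x) n <= (INR D + 1) * log2 (INR n + 1).
Proof.
  assert (Hn : 0 < INR n + 1) by (pose proof (pos_INR n); lra).
  set (q := / (INR n + 1)).
  assert (Hq : 0 < q <= 1).
  { unfold q; split; [apply Rinv_0_lt_compat; lra|].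
    rewrite <- Rinv_1; apply Rinv_le_contravar; pose proof (pos_INR n); lra. }
  assert (Hbound : q ^ S D <= seq_prob (pi_prob D c x) n).
  { apply Rle_trans with (q ^ pi_exponent n); [|apply pi_seq_prob_ge].
    apply pow_le_pow_of_le_1; [lra|unfold pi_exponent; lia]. }
  destruct (logloss_le_of_le _ n _ (pow_lt q (S D) (proj1 Hq)) Hbound) as [Hpos Hloss].
  split; [exact Hpos|].
  rewrite log2_pow, S_INR in Hloss by lra.
  unfold q in Hloss; rewrite log2_Rinv in Hloss by lra; lra.
Qed.

(** ** The predictor zeta_D *)

Fixpoint neg_features (n : nat) : list (list bool) :=
  match n with
  | O => []
  | S m =>
      if x (S m) then neg_features m
      else if in_dec (list_eq_dec bool_dec) (c (S m)) (neg_features m)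
           then neg_features m else c (S m) :: neg_features m
  end.

Lemma In_neg_features (n : nat) (v : list bool) :
  In v (neg_features n) <-> exists tau, (1 <= tau <= n)%nat /\ x tau = false /\ c tau = v.
Proof.
  induction n as [|n IH].
  - split; [simpl; tauto|intros [tau [Htau _]]; lia].
  - assert (Hstep : In v (neg_features (S n)) <->
                    In v (neg_features n) \/ (x (S n) = false /\ c (S n) = v)).
    { simpl; destruct (x (S n)); [intuition discriminate|].
      destruct (in_dec _ (c (S n)) (neg_features n)) as [Hin|Hin]; simpl;
        intuition (subst; auto). }
    rewrite Hstep, IH; split.
    + intros [[tau [Htau Htv]]|Hnew]; [exists tau; split; [lia|exact Htv]|].
      exists (S n); split; [lia|exact Hnew].
    + intros [tau [Htau Htv]].
      destruct (Nat.eq_dec tau (S n)) as [->|Hne]; [right; exact Htv|].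
      left; exists tau; split; [lia|exact Htv].
Qed.

Lemma NoDup_neg_features (n : nat) : NoDup (neg_features n).
Proof.
  induction n as [|n IH]; simpl; [constructor|].
  destruct (x (S n)); [exact IH|].
  destruct (in_dec _ _ _); [exact IH|constructor; assumption].
Qed.

Lemma length_neg_features_le (n : nat) :
  (forall t, length (c t) = D) -> (length (neg_features n) <= 2 ^ D)%nat.
Proof.
  intros Hc; replace (2 ^ D)%nat with (length (ktuples D [true; false]))
    by (rewrite length_ktuples; reflexivity).
  apply NoDup_incl_length; [apply NoDup_neg_features|].
  intros v Hv; apply In_neg_features in Hv; destruct Hv as [tau [_ [_ <-]]].
  apply In_ktuples; [apply Hc|intros [|] _; simpl; auto].
Qed.

Lemma neg_features_nil (n : nat) : J = [] -> neg_features n = [].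
Proof.
  intros HJ; induction n as [|n IH]; simpl; [reflexivity|].
  rewrite (x_conj (S n)), HJ; exact IH.
Qed.

Lemma zeta_inA_succ (n : nat) :
  zeta_inA c x (S n) = true <-> In (c (S n)) (neg_features n).
Proof.
  rewrite In_neg_features; unfold zeta_inA; rewrite existsb_exists.
  replace (S n - 1)%nat with n by lia; split.
  - intros [tau [Htau Hb]]; apply in_seq in Htau; apply andb_prop in Hb.
    destruct Hb as [Hx Hc].
    destruct (list_eq_dec bool_dec (c tau) (c (S n))); [|discriminate].
    exists tau; split; [lia|split; [apply negb_true_iff|]; assumption].
  - intros [tau [Htau [Hx Hc]]]; exists tau; split; [apply in_seq; lia|].
    rewrite Hx, Hc; destruct (list_eq_dec bool_dec _ _); [reflexivity|contradiction].
Qed.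

Lemma zeta_inA_label (n : nat) : zeta_inA c x (S n) = true -> x (S n) = false.
Proof.
  intros HA; apply zeta_inA_succ, In_neg_features in HA.
  destruct HA as [tau [_ [Hx Hc]]].
  rewrite x_conj, <- Hc, <- x_conj; exact Hx.
Qed.

Lemma zeta_w_eq (t j : nat) : zeta_w D c x t j = b2R (consistent t j).
Proof.
  unfold zeta_w, consistent, prodR.
  induction (seq 1 (t - 1)) as [|tau l IH]; simpl; [reflexivity|].
  destruct (x tau); simpl; rewrite IH; [|reflexivity].
  destruct (Defs.comp (c tau) j); simpl; ring.
Qed.

Lemma zeta_p1_eq (t : nat) : zeta_p1 D c x t = (1 - alpha D) ^ length (falsified t).
Proof.
  destruct (Nat.eq_dec D 0) as [HD|HD].
  - unfold zeta_p1, falsified; rewrite HD; reflexivity.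
  - unfold zeta_p1, falsified.
    rewrite <- (prodR_ratio (alpha D) (consistent t) (Defs.comp (c t)))
      by (apply alpha_lt_1; lia).
    apply prodR_ext; intros j _; rewrite zeta_w_eq; reflexivity.
Qed.

Definition zeta_weight (n : nat) : R :=
  alpha D ^ length (neg_features n) * (1 - alpha D) ^ (D - length (pi_Dset D c x (S n))).

Lemma zeta_weight_nonneg (n : nat) : 0 <= zeta_weight n.
Proof.
  pose proof (alpha_pos D); pose proof (alpha_le_1 D).
  unfold zeta_weight; apply Rmult_le_pos; apply pow_le; lra.
Qed.

Lemma zeta_prob_nonneg (t : nat) : 0 <= zeta_prob D c x t.
Proof.
  pose proof (alpha_pos D); pose proof (alpha_le_1 D).
  assert (Hp : 0 <= zeta_p1 D c x t <= 1).
  { rewrite zeta_p1_eq; split; [apply pow_le; lra|].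
    rewrite <- (pow_O (1 - alpha D)); apply pow_le_pow_of_le_1; [lra|lia]. }
  unfold zeta_prob; destruct (zeta_inA c x t), (x t); lra.
Qed.

Lemma zeta_weight_succ_le (n : nat) :
  zeta_weight (S n) <= zeta_weight n * zeta_prob D c x (S n).
Proof.
  pose proof (alpha_pos D); pose proof (alpha_le_1 D).
  unfold zeta_prob; destruct (zeta_inA c x (S n)) eqn:HA.
  - (* a repeated negative: predicted with certainty, nothing changes *)
    pose proof (zeta_inA_label n HA) as Hx; apply zeta_inA_succ in HA.
    rewrite Hx, Rmult_1_r; unfold zeta_weight; simpl neg_features.
    rewrite Hx, (pi_Dset_succ_neg n Hx).
    destruct (in_dec _ _ _); [lra|contradiction].
  - rewrite zeta_p1_eq; destruct (x (S n)) eqn:Hx.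
    + (* a positive example removes the falsified coordinates from D_t *)
      pose proof (length_pi_Dset_le (S n)); pose proof (length_pi_Dset_succ_pos n Hx).
      unfold zeta_weight; simpl neg_features; rewrite Hx.
      replace (D - length (pi_Dset D c x (S (S n))))%nat
        with (D - length (pi_Dset D c x (S n)) + length (falsified (S n)))%nat by lia.
      rewrite pow_add; right; ring.
    + (* a new negative vector: some coordinate of J in D_t is falsified *)
      assert (Hnew : ~ In (c (S n)) (neg_features n))
        by (rewrite <- zeta_inA_succ; congruence).
      assert (Hm : (1 <= length (falsified (S n)))%nat)
        by (pose proof (falsified_neg (S n) Hx); destruct (falsified (S n));
            [congruence|simpl; lia]).
      assert (Hpow : (1 - alpha D) ^ length (falsified (S n)) <= 1 - alpha D)
        by (rewrite <- (pow_1 (1 - alpha D)) at 2; apply pow_le_pow_of_le_1; lra || lia).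
      pose proof (zeta_weight_nonneg n) as HW.
      unfold zeta_weight in *; simpl neg_features; rewrite Hx, (pi_Dset_succ_neg n Hx).
      destruct (in_dec _ _ _); [contradiction|simpl length; simpl pow].
      nra.
Qed.

Lemma zeta_seq_prob_ge (n : nat) : zeta_weight n <= seq_prob (zeta_prob D c x) n.
Proof.
  induction n as [|n IH].
  - unfold zeta_weight; rewrite length_pi_Dset_1, Nat.sub_diag.
    unfold seq_prob, prodR; simpl; lra.
  - rewrite seq_prob_succ; eapply Rle_trans; [apply zeta_weight_succ_le|].
    apply Rmult_le_compat_r; [apply zeta_prob_nonneg|exact IH].
Qed.

Theorem zeta_logloss_le (n : nat) :
  (forall t, length (c t) = D) ->
  0 < seq_prob (zeta_prob D c x) n /\ logloss (zeta_prob D c x) n <= 2 * INR D ^ 2.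
Proof.
  intros Hc.
  assert (HNM : length (neg_features n) = 0%nat \/
                (D - length (pi_Dset D c x (S n)) < D)%nat).
  { assert (HJ : J = [] \/ exists j, In j J)
      by (destruct J as [|j J']; [left|right; exists j; left]; reflexivity).
    destruct HJ as [HJ|[j Hj]].
    - left; rewrite neg_features_nil by exact HJ; reflexivity.
    - right; pose proof (In_pi_Dset_of_In (S n) j Hj) as HjD.
      pose proof (J_lt_D j Hj).
      destruct (pi_Dset D c x (S n)); [contradiction|simpl; lia]. }
  destruct (zeta_weight_bound D _ _ (length_neg_features_le n Hc) (Nat.le_sub_l _ _) HNM)
    as [Hpos Hbound].
  destruct (logloss_le_of_le _ n _ Hpos (zeta_seq_prob_ge n)) as [Hp Hl].
  split; [exact Hp|lra].
Qed.

End MonotoneConjunction.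

Lemma INR_Dim (k d : nat) : INR (Dim k d) = 2 ^ k * INR d ^ k.
Proof. unfold Dim; rewrite pow_INR, mult_INR, Rpow_mult_distr; reflexivity. Qed.

Lemma two_mul_INR_Dim_sq (k d : nat) :
  2 * INR (Dim k d) ^ 2 = 2 ^ (2 * k + 1) * INR d ^ (2 * k).
Proof.
  rewrite INR_Dim, <- Rpow_mult_distr, <- pow_mult, pow_add, Rpow_mult_distr.
  replace (k * 2)%nat with (2 * k)%nat by lia; simpl; ring.
Qed.

Theorem corollary6 (n k d : nat) (a : nat -> assignment) (hstar : list (list literal)) :
  is_kCNF k d hstar ->
  let x := fun t => eval_cnf hstar (a t) in
  (0 < seq_prob (Alg1_prob k d a x) n /\
   logloss (Alg1_prob k d a x) n <= 2 ^ (2 * k + 1) * INR d ^ (2 * k)) /\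
  (0 < seq_prob (Alg2_prob k d a x) n /\
   logloss (Alg2_prob k d a x) n <= (2 ^ k * INR d ^ k + 1) * log2 (INR n + 1)).
Proof.
  intros Hk x.
  destruct (kCNF_feature_conjunction k d hstar Hk) as [J [HJ HJx]].
  set (c := fun s => phi k d (a s)).
  assert (Hx : forall t, x t = forallb (Defs.comp (c t)) J) by (intros t; apply HJx).
  split.
  - rewrite <- two_mul_INR_Dim_sq.
    apply (zeta_logloss_le (Dim k d) c x J HJ Hx n).
    intros t; apply length_phi.
  - rewrite <- INR_Dim.
    apply (pi_logloss_le (Dim k d) c x J HJ Hx n).
Qed.
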